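(* Let $0<q<1$ and let $s_1,\dots,s_n$ be positive integers with $s_j>1$ for some $j$. Then \[ T[s_1,\dots,s_n]-T[s_2,\dots,s_n,s_1] = \zeta[s_1+1,s_2,\dots,s_n] - \sum_{k=0}^{s_1-2}\zeta[s_1-k,s_2,\dots,s_n,k+1], \] where the sum on the right is zero if $s_1=1$.
   Context: Fix $0<q<1$ and $[x]_q := (1-q^x)/(1-q)$. For positive integers $t_1,\dots,t_N$ with $t_1>1$, $\zeta[t_1,\dots,t_N] := \sum_{k_1>\cdots>k_N>0}\prod_{j=1}^N q^{(t_j-1)k_j}/[k_j]_q^{t_j}$. For positive integers $s_1,\dots,s_n$ define \[ T[s_1,\dots,s_n] := \sum_{k_1>\cdots>k_n>k_{n+1}\ge 0}\frac{q^{k_1-k_{n+1}}}{[k_1-k_{n+1}]_q}\prod_{j=1}^n\frac{q^{(s_j-1)k_j}}{[k_j]_q^{s_j}} \] (sum over integers satisfying the indicated inequalities); it is finite when some $s_j>1$. *)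

From Stdlib Require Import Reals List.
From Coquelicot Require Import Coquelicot.
Open Scope R_scope.

Fixpoint sumlt (f : nat -> R) (n : nat) : R :=
  match n with O => 0 | S m => sumlt f m + f m end.

Definition qint (q : R) (x : nat) : R := (1 - q ^ x) / (1 - q).

Definition qterm (q : R) (t k : nat) : R := q ^ ((t - 1) * k) / (qint q k) ^ t.

(* zsum q [t1;..;tN] b = sum over b > k1 > ... > kN > 0 of prod_j qterm q tj kj *)
Fixpoint zsum (q : R) (ts : list nat) (b : nat) : R :=
  match ts with
  | nil => 1
  | t :: ts' => sumlt (fun k => match k with O => 0 | _ => qterm q t k * zsum q ts' k end) b
  end.

(* wsum q [t1;..;tn] b f = sum over b > k1 > ... > kn > k_{n+1} >= 0
   of prod_j qterm q tj kj * f k_{n+1} *)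
Fixpoint wsum (q : R) (ts : list nat) (b : nat) (f : nat -> R) : R :=
  match ts with
  | nil => sumlt f b
  | t :: ts' => sumlt (fun k => match k with O => 0 | _ => qterm q t k * wsum q ts' k f end) b
  end.

Definition Ttrunc (q : R) (ss : list nat) (M : nat) : R :=
  match ss with
  | nil => 0
  | s :: ss' =>
      sumlt (fun k1 => match k1 with
                       | O => 0
                       | _ => qterm q s k1 *
                              wsum q ss' k1 (fun k => q ^ (k1 - k) / qint q (k1 - k))
                       end) M
  end.

(* All summands are positive, so the (multiple) series equals the limit of the
   nondecreasing truncations over k1 < M. *)
Definition qzeta (q : R) (ts : list nat) : R := real (Lim_seq (zsum q ts)).
Definition qT (q : R) (ss : list nat) : R := real (Lim_seq (Ttrunc q ss)).

From Stdlib Require Import Reals List Lia Lra Psatz.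
From Coquelicot Require Import Coquelicot.
Open Scope R_scope.

(* Write w(d) = q^d/[d]_q and Q_t(k) = q^((t-1)k)/[k]_q^t. Splitting [k]_q = [m]_q + q^m [k-m]_q
   gives, for 0 < m < k,
     Q_s(k) w(k-m) + sum_(j < s-1) Q_(s-j)(k) Q_(j+1)(m) = Q_s(m) (w(k-m) - w(k)),
   and Q_s(k) w(k) = Q_(s+1)(k). Inserting this into the summand of T[s1,...,sn] with k = k1 and
   m = k_(n+1) produces zeta[s1+1,s2,...,sn], the values zeta[s1-j,s2,...,sn,j+1], and a sum in
   which k1 only occurs through w(k1-m) - w(k1); summing over k1 telescopes it into
   T[s2,...,sn,s1]. For the truncations k1 < M all of this is a finite identity, up to a boundary
   term of size O(M^L q^M); an entry s_j > 1 makes every truncation bounded, hence convergent. *)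

Lemma sumlt_ext (F G : nat -> R) n :
  (forall k, (k < n)%nat -> F k = G k) -> sumlt F n = sumlt G n.
Proof.
  induction n as [|n IH]; intros H; simpl; auto.
  rewrite IH, H; auto; intros; apply H; lia.
Qed.

Lemma sumlt_plus (F G : nat -> R) n :
  sumlt (fun k => F k + G k) n = sumlt F n + sumlt G n.
Proof. induction n as [|n IH]; simpl; [lra | rewrite IH; lra]. Qed.

Lemma sumlt_scal c (F : nat -> R) n : sumlt (fun k => c * F k) n = c * sumlt F n.
Proof. induction n as [|n IH]; simpl; [lra | rewrite IH; lra]. Qed.

Lemma sumlt_minus (F G : nat -> R) n :
  sumlt (fun k => F k - G k) n = sumlt F n - sumlt G n.
Proof. induction n as [|n IH]; simpl; [lra | rewrite IH; lra]. Qed.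

Lemma sumlt_eq0 (F : nat -> R) n : (forall k, (k < n)%nat -> F k = 0) -> sumlt F n = 0.
Proof.
  induction n as [|n IH]; intros H; simpl; auto.
  rewrite IH, H; auto with arith; lra.
Qed.

Lemma sumlt_const c n : sumlt (fun _ => c) n = INR n * c.
Proof. induction n as [|n IH]; simpl sumlt; [simpl; lra | rewrite IH, S_INR; lra]. Qed.

Lemma sumlt_le (F G : nat -> R) n :
  (forall k, (k < n)%nat -> F k <= G k) -> sumlt F n <= sumlt G n.
Proof.
  induction n as [|n IH]; intros H; simpl; [lra|].
  apply Rplus_le_compat; [apply IH; intros k Hk|]; apply H; lia.
Qed.

Lemma sumlt_nonneg (F : nat -> R) n : (forall k, (k < n)%nat -> 0 <= F k) -> 0 <= sumlt F n.
Proof. intros H. rewrite <- (sumlt_eq0 (fun _ => 0) n) by auto. now apply sumlt_le. Qed.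

Lemma sumlt_exchange (F : nat -> nat -> R) n N :
  sumlt (fun k => sumlt (F k) N) n = sumlt (fun j => sumlt (fun k => F k j) n) N.
Proof.
  induction n as [|n IH]; simpl.
  - now rewrite sumlt_eq0.
  - now rewrite IH, <- sumlt_plus.
Qed.

Lemma sumlt_pad (F : nat -> R) k n :
  (k <= n)%nat -> sumlt F k = sumlt (fun m => if (m <? k)%nat then F m else 0) n.
Proof.
  intros Hk. replace n with (k + (n - k))%nat by lia.
  induction (n - k)%nat as [|d IH].
  - rewrite Nat.add_0_r. apply sumlt_ext. intros m Hm.
    now replace (m <? k)%nat with true by (symmetry; apply Nat.ltb_lt; lia).
  - rewrite Nat.add_succ_r. simpl. rewrite <- IH.
    replace (k + d <? k)%nat with false by (symmetry; apply Nat.ltb_ge; lia). lra.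
Qed.

Lemma sumlt_triangle (F : nat -> nat -> R) n :
  sumlt (fun k => sumlt (F k) k) n =
  sumlt (fun m => sumlt (fun k => if (m <? k)%nat then F k m else 0) n) n.
Proof.
  rewrite (sumlt_ext _ (fun k => sumlt (fun m => if (m <? k)%nat then F k m else 0) n))
    by (intros k Hk; apply sumlt_pad; lia).
  apply sumlt_exchange.
Qed.

Definition vanish0 (k : nat) (x : R) : R := match k with O => 0 | S _ => x end.

Section WeightedSums.
Variable q : R.

Lemma wsum_ext ts : forall b (g g' : nat -> R),
  (forall m, (m < b)%nat -> g m = g' m) -> wsum q ts b g = wsum q ts b g'.
Proof.
  induction ts as [|t ts IH]; intros b g g' H; simpl.
  - now apply sumlt_ext.
  - apply sumlt_ext. intros [|k] Hk; auto. f_equal. apply IH. intros; apply H; lia.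
Qed.

Lemma wsum_plus ts : forall b (g g' : nat -> R),
  wsum q ts b (fun m => g m + g' m) = wsum q ts b g + wsum q ts b g'.
Proof.
  induction ts as [|t ts IH]; intros b g g'; simpl.
  - apply sumlt_plus.
  - rewrite <- sumlt_plus. apply sumlt_ext. intros [|k] _; [lra|]. rewrite IH. lra.
Qed.

Lemma wsum_scal ts : forall b c (g : nat -> R),
  wsum q ts b (fun m => c * g m) = c * wsum q ts b g.
Proof.
  induction ts as [|t ts IH]; intros b c g; simpl.
  - apply sumlt_scal.
  - rewrite <- sumlt_scal. apply sumlt_ext. intros [|k] _; [lra|]. rewrite IH. lra.
Qed.

Lemma wsum_minus ts b (g g' : nat -> R) :
  wsum q ts b (fun m => g m - g' m) = wsum q ts b g - wsum q ts b g'.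
Proof.
  rewrite (wsum_ext ts b _ (fun m => g m + (-1) * g' m)) by (intros; lra).
  rewrite wsum_plus, wsum_scal. lra.
Qed.

Lemma wsum_eq0 ts b : wsum q ts b (fun _ => 0) = 0.
Proof.
  revert b; induction ts as [|t ts IH]; intros b; simpl; apply sumlt_eq0; auto.
  intros [|k] _; [|rewrite IH]; lra.
Qed.

Lemma wsum_sumlt ts b (G : nat -> nat -> R) N :
  wsum q ts b (fun m => sumlt (fun j => G j m) N) = sumlt (fun j => wsum q ts b (G j)) N.
Proof.
  induction N as [|N IH]; simpl.
  - apply wsum_eq0.
  - now rewrite wsum_plus, IH.
Qed.

Lemma wsum_snoc ss t : forall b (g : nat -> R),
  wsum q (ss ++ t :: nil) b g = wsum q ss b (fun k => vanish0 k (qterm q t k * sumlt g k)).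
Proof.
  induction ss as [|s ss IH]; intros b g; simpl; auto.
  apply sumlt_ext. intros [|k] _; auto. now rewrite IH.
Qed.

Lemma zsum_snoc ss t : forall b,
  zsum q (ss ++ t :: nil) b = wsum q ss b (fun k => vanish0 k (qterm q t k)).
Proof.
  induction ss as [|s ss IH]; intros b; simpl.
  - apply sumlt_ext. intros [|k] _; simpl; lra.
  - apply sumlt_ext. intros [|k] _; auto. now rewrite IH.
Qed.

Lemma wsum_delta0 ts : forall b, (0 < b)%nat ->
  wsum q ts b (fun m => match m with O => 1 | S _ => 0 end) = zsum q ts b.
Proof.
  induction ts as [|t ts IH]; intros b Hb; simpl.
  - destruct b as [|b]; [lia|]. clear Hb.
    induction b as [|b IHb]; simpl in *; lra.
  - apply sumlt_ext. intros [|k] Hk; auto. rewrite IH by lia. auto.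
Qed.

End WeightedSums.

Definition qfrac (q : R) (d : nat) : R := q ^ d / qint q d.

Lemma qint_0 q : qint q 0 = 0.
Proof. unfold qint. simpl. unfold Rdiv. ring. Qed.

Section QBounds.
Variable q : R.
Hypothesis hq : 0 < q < 1.

Lemma qpow_le1 n : q ^ n <= 1.
Proof. rewrite <- (pow1 n). apply pow_incr. lra. Qed.

Lemma qpow_antimono a b : (b <= a)%nat -> q ^ a <= q ^ b.
Proof.
  intros H. replace a with (b + (a - b))%nat by lia. rewrite pow_add.
  pose proof (qpow_le1 (a - b)). pose proof (pow_lt q b (proj1 hq)). nra.
Qed.

Lemma qint_ge1 k : (1 <= k)%nat -> 1 <= qint q k.
Proof.
  intros Hk. unfold qint. pose proof (qpow_antimono k 1 Hk).
  apply (Rmult_le_reg_r (1 - q)); [lra|].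
  unfold Rdiv. rewrite Rmult_assoc, Rinv_l by lra. simpl in *. lra.
Qed.

Lemma qint_pos k : (1 <= k)%nat -> 0 < qint q k.
Proof. intros Hk; pose proof (qint_ge1 k Hk); lra. Qed.

Lemma pow_div_qint_le k n x : (1 <= k)%nat -> 0 <= x -> x / qint q k ^ n <= x.
Proof.
  intros Hk Hx. pose proof (pow_R1_Rle _ n (qint_ge1 k Hk)).
  unfold Rdiv. rewrite <- (Rmult_1_r x) at 2. apply Rmult_le_compat_l; auto.
  rewrite <- Rinv_1. apply Rinv_le_contravar; lra.
Qed.

Lemma qterm_nonneg t k : 0 <= qterm q t k.
Proof.
  unfold qterm. destruct k as [|k].
  - rewrite qint_0. destruct t; simpl; unfold Rdiv; [lra|].
    rewrite Rmult_0_l, Rinv_0. lra.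
  - pose proof (qint_pos (S k) ltac:(lia)). pose proof (pow_lt q ((t - 1) * S k) (proj1 hq)).
    apply Rlt_le, Rdiv_lt_0_compat; auto. now apply pow_lt.
Qed.

Lemma qterm_le_qpow t k : (1 <= k)%nat -> qterm q t k <= q ^ ((t - 1) * k).
Proof. intros Hk. apply pow_div_qint_le; auto. apply pow_le; lra. Qed.

Lemma qterm_le1 t k : (1 <= k)%nat -> qterm q t k <= 1.
Proof. intros Hk. eapply Rle_trans; [apply qterm_le_qpow; auto | apply qpow_le1]. Qed.

Lemma qterm_le_geom t k : (1 < t)%nat -> (1 <= k)%nat -> qterm q t k <= q ^ k.
Proof.
  intros Ht Hk. eapply Rle_trans; [apply qterm_le_qpow; auto|].
  apply qpow_antimono. nia.
Qed.

Lemma qfrac_nonneg d : 0 <= qfrac q d.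
Proof.
  unfold qfrac. destruct d as [|d].
  - rewrite qint_0. unfold Rdiv. rewrite Rinv_0. lra.
  - apply Rlt_le, Rdiv_lt_0_compat; [apply pow_lt; lra | apply qint_pos; lia].
Qed.

Lemma qfrac_le_qpow d : qfrac q d <= q ^ d.
Proof.
  unfold qfrac. destruct d as [|d].
  - rewrite qint_0. unfold Rdiv. rewrite Rinv_0. simpl. lra.
  - rewrite <- (pow_1 (qint q (S d))). apply pow_div_qint_le; [lia|]. apply pow_le; lra.
Qed.

Lemma qfrac_le1 d : qfrac q d <= 1.
Proof. eapply Rle_trans; [apply qfrac_le_qpow | apply qpow_le1]. Qed.

End QBounds.

(* [z] stands for the q-integer (1 - z)/u with u = 1 - q, so that [q^m q^d] = [q^m] + q^m [q^d]. *)
Lemma bracket_partial_fraction x y u : 0 < x < 1 -> 0 < y < 1 -> 0 < u ->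
  / ((1 - x * y) / u) * (y / ((1 - y) / u)) =
  / ((1 - x) / u) * (y / ((1 - y) / u) - x * y / ((1 - x * y) / u)).
Proof. intros. assert (0 < 1 - x * y) by nra. field. repeat split; lra. Qed.

Lemma bracket_partial_fraction_weighted x y u : 0 < x < 1 -> 0 < y < 1 -> 0 < u ->
  x * y / ((1 - x * y) / u) * (y / ((1 - y) / u) - x * y / ((1 - x * y) / u))
  + x * y / ((1 - x * y) / u) / ((1 - x * y) / u) =
  x / ((1 - x) / u) * (y / ((1 - y) / u) - x * y / ((1 - x * y) / u)).
Proof. intros. assert (0 < 1 - x * y) by nra. field. repeat split; lra. Qed.

Section PartialFractions.
Variable q : R.
Hypothesis hq : 0 < q < 1.

Lemma qterm_succ t k : (1 <= t)%nat -> (1 <= k)%nat ->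
  qterm q (S t) k = qterm q t k * qfrac q k.
Proof.
  intros Ht Hk. unfold qterm, qfrac.
  replace ((S t - 1) * k)%nat with ((t - 1) * k + k)%nat by nia.
  rewrite pow_add. pose proof (qint_pos q hq k Hk). simpl. field.
  split; [lra | apply pow_nonzero; lra].
Qed.

Lemma qpow_split k m : (0 < m < k)%nat ->
  q ^ k = q ^ m * q ^ (k - m) /\ 0 < q ^ m < 1 /\ 0 < q ^ (k - m) < 1.
Proof.
  intros H. split; [rewrite <- pow_add; f_equal; lia|].
  split; split; try (apply pow_lt; lra); apply pow_lt_1_compat; lra || lia.
Qed.

Lemma qterm1_partial_fraction k m : (0 < m < k)%nat ->
  qterm q 1 k * qfrac q (k - m) = qterm q 1 m * (qfrac q (k - m) - qfrac q k).
Proof.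
  intros H. unfold qterm, qfrac, qint. simpl. rewrite !Rmult_1_r, !Rdiv_1_l.
  destruct (qpow_split k m H) as [-> [Hx Hy]].
  apply bracket_partial_fraction; lra.
Qed.

Lemma qfrac_partial_fraction k m : (0 < m < k)%nat ->
  qfrac q k * (qfrac q (k - m) - qfrac q k) + qterm q 2 k
  = qfrac q m * (qfrac q (k - m) - qfrac q k).
Proof.
  intros H.
  assert (E2 : qterm q 2 k = qfrac q k / qint q k).
  { pose proof (qint_pos q hq k ltac:(lia)). unfold qterm, qfrac.
    replace ((2 - 1) * k)%nat with k by lia. field. lra. }
  rewrite E2. unfold qfrac, qint.
  destruct (qpow_split k m H) as [-> [Hx Hy]].
  apply bracket_partial_fraction_weighted; lra.
Qed.

Lemma qterm_partial_fraction k m p : (0 < m < k)%nat ->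
  qterm q (S p) k * qfrac q (k - m)
  + sumlt (fun j => qterm q (S p - j) k * qterm q (S j) m) p
  = qterm q (S p) m * (qfrac q (k - m) - qfrac q k).
Proof.
  intros H. induction p as [|p IH].
  - simpl sumlt. rewrite Rplus_0_r. now apply qterm1_partial_fraction.
  - change (sumlt ?F (S p)) with (sumlt F p + F p). cbv beta.
    replace (S (S p) - p)%nat with 2%nat by lia.
    rewrite (sumlt_ext _ (fun j => qfrac q k * (qterm q (S p - j) k * qterm q (S j) m))).
    2:{ intros j Hj. replace (S (S p) - j)%nat with (S (S p - j)) by lia.
        rewrite qterm_succ by lia. ring. }
    rewrite sumlt_scal, !(qterm_succ (S p)) by lia.
    transitivity (qfrac q k * (qterm q (S p) k * qfrac q (k - m)
      + sumlt (fun j => qterm q (S p - j) k * qterm q (S j) m) p)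
      + qterm q 2 k * qterm q (S p) m); [ring|].
    rewrite IH.
    transitivity (qterm q (S p) m
      * (qfrac q k * (qfrac q (k - m) - qfrac q k) + qterm q 2 k)); [ring|].
    rewrite qfrac_partial_fraction by auto. ring.
Qed.

End PartialFractions.

Definition window (f : nat -> R) (M m : nat) : R := sumlt (fun j => f (M - S j)%nat) m.

Lemma window_succ f N m : window f (S N) m - window f N m = f N - f (N - m)%nat.
Proof.
  unfold window. induction m as [|m IH]; cbn [sumlt].
  - rewrite Nat.sub_0_r. ring.
  - change (S N - S m)%nat with (N - m)%nat. lra.
Qed.

Lemma sumlt_telescope_window f K m M : (K < M)%nat ->
  sumlt (fun k => if (K <? k)%nat then f (k - m)%nat - f k else 0) M
  = window f (S K) m - window f M m.
Proof.
  intros HKM. replace M with (S K + (M - S K))%nat by lia.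
  induction (M - S K)%nat as [|d IH].
  - rewrite Nat.add_0_r, sumlt_eq0; [lra|]. intros k Hk.
    now replace (K <? k)%nat with false by (symmetry; apply Nat.ltb_ge; lia).
  - rewrite Nat.add_succ_r. change (sumlt ?F (S ?n)) with (sumlt F n + F n). rewrite IH.
    replace (K <? S K + d)%nat with true by (symmetry; apply Nat.ltb_lt; lia).
    pose proof (window_succ f (S K + d) m). lra.
Qed.

Section Decomposition.
Variable q : R.
Hypothesis hq : 0 < q < 1.

Definition Ttele (p : nat) (ss : list nat) (M : nat) : R :=
  sumlt (fun k1 => vanish0 k1 (wsum q ss k1
    (fun m => vanish0 m (qterm q (S p) m * (qfrac q (k1 - m) - qfrac q k1))))) M.

Definition Tboundary (p : nat) (ss : list nat) (M : nat) : R :=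
  wsum q ss M (fun m => vanish0 m (qterm q (S p) m * window (qfrac q) M m)).

Lemma qterm_qfrac_decomposition p K m : (m < K)%nat ->
  qterm q (S p) K * qfrac q (K - m)
  = qterm q (S (S p)) K * (match m with O => 1 | S _ => 0 end)
    + vanish0 m (qterm q (S p) m * (qfrac q (K - m) - qfrac q K))
    - sumlt (fun j => qterm q (S p - j) K * vanish0 m (qterm q (S j) m)) p.
Proof.
  intros Hm. destruct m as [|m]; cbn [vanish0].
  - rewrite sumlt_eq0 by (intros; ring).
    rewrite Nat.sub_0_r, (qterm_succ q hq (S p)) by lia. ring.
  - pose proof (qterm_partial_fraction q hq K (S m) p ltac:(lia)). lra.
Qed.

Lemma Ttrunc_split p ss M :
  Ttrunc q (S p :: ss) M
  = zsum q (S (S p) :: ss) M + Ttele p ss M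
    - sumlt (fun j => zsum q ((S p - j)%nat :: ss ++ S j :: nil) M) p.
Proof.
  unfold Ttrunc, Ttele. cbn [zsum].
  rewrite <- sumlt_exchange, <- sumlt_plus, <- sumlt_minus.
  apply sumlt_ext. intros [|K] _.
  { cbn [vanish0]. rewrite sumlt_eq0 by auto. ring. }
  cbv beta iota.
  change (fun k => q ^ (S K - k) / qint q (S K - k)) with (fun k => qfrac q (S K - k)).
  rewrite <- wsum_scal.
  rewrite (wsum_ext q ss _ _ _ (fun m => qterm_qfrac_decomposition p (S K) m)).
  rewrite wsum_minus, wsum_plus, wsum_scal, wsum_delta0 by lia.
  rewrite (wsum_sumlt q ss (S K)
    (fun j m => qterm q (S p - j) (S K) * vanish0 m (qterm q (S j) m))).
  f_equal. apply sumlt_ext. intros j _. now rewrite wsum_scal, zsum_snoc.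
Qed.

Lemma tail_telescope p K m M : (K < M)%nat ->
  sumlt (fun k1 => if (K <? k1)%nat
                   then vanish0 m (qterm q (S p) m * (qfrac q (k1 - m) - qfrac q k1))
                   else 0) M
  = vanish0 m (qterm q (S p) m * window (qfrac q) (S K) m)
    - vanish0 m (qterm q (S p) m * window (qfrac q) M m).
Proof.
  intros HKM. destruct m as [|m]; cbn [vanish0].
  - rewrite sumlt_eq0; [lra|]. intros k _. now destruct (K <? k)%nat.
  - rewrite <- Rmult_minus_distr_l, <- sumlt_telescope_window by auto.
    rewrite <- sumlt_scal. apply sumlt_ext. intros k _. destruct (K <? k)%nat; ring.
Qed.

Lemma Ttele_eq p ss M :
  Ttele p ss M = Ttrunc q (ss ++ S p :: nil) M - Tboundary p ss M.
Proof.
  unfold Ttele, Tboundary, Ttrunc. destruct ss as [|s2 ss]; cbn [app wsum].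
  - rewrite (sumlt_ext _ (fun k1 => sumlt (fun m => vanish0 m
        (qterm q (S p) m * (qfrac q (k1 - m) - qfrac q k1))) k1)) by (intros [|k] _; reflexivity).
    rewrite sumlt_triangle, <- sumlt_minus. apply sumlt_ext. intros m Hm.
    now rewrite tail_telescope.
  - rewrite (sumlt_ext _ (fun k1 => sumlt (fun k2 => vanish0 k2 (qterm q s2 k2 * wsum q ss k2
        (fun m => vanish0 m (qterm q (S p) m * (qfrac q (k1 - m) - qfrac q k1))))) k1))
      by (intros [|k] _; reflexivity).
    rewrite sumlt_triangle, <- sumlt_minus. apply sumlt_ext. intros [|K] HK.
    { rewrite sumlt_eq0; [lra|]. intros k _. now destruct (0 <? k)%nat. }
    rewrite (sumlt_ext _ (fun k1 => qterm q s2 (S K) * wsum q ss (S K) (fun m =>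
        if (S K <? k1)%nat
        then vanish0 m (qterm q (S p) m * (qfrac q (k1 - m) - qfrac q k1)) else 0)))
      by (intros k1 _; destruct (S K <? k1)%nat; [reflexivity | rewrite wsum_eq0; ring]).
    cbn [vanish0]. rewrite sumlt_scal, <- wsum_sumlt, wsum_snoc.
    rewrite <- Rmult_minus_distr_l, <- wsum_minus. f_equal.
    apply wsum_ext. intros m _. now rewrite tail_telescope.
Qed.

End Decomposition.

Section Bounds.
Variable q : R.
Hypothesis hq : 0 < q < 1.

Lemma qpow_qinv k : q ^ k * (/ q) ^ k = 1.
Proof. rewrite <- Rpow_mult_distr, Rinv_r by lra. apply pow1. Qed.

Lemma qpow_sub M m : (m <= M)%nat -> q ^ (M - m) = q ^ M * (/ q) ^ m.
Proof.
  intros H. replace M with ((M - m) + m)%nat at 2 by lia.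
  rewrite pow_add, Rmult_assoc, qpow_qinv. ring.
Qed.

Lemma INR_pow_le k b n : (k <= b)%nat -> INR k ^ n <= INR b ^ n.
Proof. intros H. apply pow_incr. split; [apply pos_INR | now apply le_INR]. Qed.

Lemma wsum_nonneg ts : forall b (g : nat -> R), (forall m, 0 <= g m) -> 0 <= wsum q ts b g.
Proof.
  induction ts as [|t ts IH]; intros b g H; simpl; apply sumlt_nonneg; auto.
  intros [|k] _; [lra|]. apply Rmult_le_pos; [apply qterm_nonneg|apply IH]; auto.
Qed.

Lemma zsum_nonneg ts : forall b, 0 <= zsum q ts b.
Proof.
  induction ts as [|t ts IH]; intros b; simpl; [lra|]. apply sumlt_nonneg.
  intros [|k] _; [lra|]. apply Rmult_le_pos; [apply qterm_nonneg|apply IH]; auto.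
Qed.

Lemma zsum_le_pow ts : forall b, zsum q ts b <= INR b ^ length ts.
Proof.
  induction ts as [|t ts IH]; intros b; simpl; [lra|].
  eapply Rle_trans; [apply (sumlt_le _ (fun _ => INR b ^ length ts))|].
  - intros [|k] Hk; [apply pow_le, pos_INR|].
    pose proof (qterm_le1 q hq t (S k) ltac:(lia)). pose proof (qterm_nonneg q hq t (S k)).
    pose proof (zsum_nonneg ts (S k)). pose proof (IH (S k)).
    pose proof (INR_pow_le (S k) b (length ts) ltac:(lia)). cbv beta iota. nra.
  - rewrite sumlt_const. lra.
Qed.

Lemma wsum_le_const ts : forall b (g : nat -> R) C, (forall m, 0 <= g m) ->
  (forall m, (m < b)%nat -> g m <= C) -> wsum q ts b g <= C * INR b ^ S (length ts).
Proof.
  induction ts as [|t ts IH]; intros b g C Hg HC; simpl.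
  - eapply Rle_trans; [apply (sumlt_le _ (fun _ => C)); auto|]. rewrite sumlt_const. lra.
  - destruct b as [|b]; [simpl; lra|].
    assert (HC0 : 0 <= C) by (pose proof (Hg 0%nat); pose proof (HC 0%nat ltac:(lia)); lra).
    eapply Rle_trans; [apply (sumlt_le _ (fun _ => C * INR (S b) ^ S (length ts)))|].
    + intros [|k] Hk; [apply Rmult_le_pos; auto; apply pow_le, pos_INR|].
      pose proof (qterm_le1 q hq t (S k) ltac:(lia)). pose proof (qterm_nonneg q hq t (S k)).
      pose proof (wsum_nonneg ts (S k) g Hg).
      assert (wsum q ts (S k) g <= C * INR (S k) ^ S (length ts))
        by (apply IH; auto; intros; apply HC; lia).
      pose proof (INR_pow_le (S k) (S b) (S (length ts)) ltac:(lia)). cbv beta iota. nra.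
    + rewrite sumlt_const. cbn [pow]. lra.
Qed.

(* An entry [t >= 2] contributes [qterm q t k <= q^k], which pays for a weight growing
   like [q^-m]. *)
Lemma wsum_le_decay ts : (exists t, In t ts /\ (1 < t)%nat) ->
  forall b (g : nat -> R) C, (forall m, 0 <= g m) ->
  (forall m, (m < b)%nat -> g m <= C * (/ q) ^ m) -> wsum q ts b g <= C * INR b ^ S (length ts).
Proof.
  induction ts as [|t ts IH]; intros Hbig b g C Hg HC; [destruct Hbig as [? [[] _]]|].
  simpl. destruct b as [|b]; [simpl; lra|].
  assert (HC0 : 0 <= C)
    by (pose proof (Hg 0%nat); pose proof (HC 0%nat ltac:(lia)); simpl in *; lra).
  eapply Rle_trans; [apply (sumlt_le _ (fun _ => C * INR (S b) ^ S (length ts)))|].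
  2:{ rewrite sumlt_const. cbn [pow]. lra. }
  intros [|k] Hk; [apply Rmult_le_pos; auto; apply pow_le, pos_INR|]. cbv beta iota.
  pose proof (qterm_nonneg q hq t (S k)). pose proof (wsum_nonneg ts (S k) g Hg).
  pose proof (INR_pow_le (S k) (S b) (S (length ts)) ltac:(lia)).
  destruct (Nat.lt_ge_cases 1 t) as [Ht|Ht].
  - pose proof (qterm_le_geom q hq t (S k) Ht ltac:(lia)).
    assert (wsum q ts (S k) g <= (C * (/ q) ^ S k) * INR (S k) ^ S (length ts)).
    { apply wsum_le_const; auto. intros m Hm. eapply Rle_trans; [apply HC; lia|].
      apply Rmult_le_compat_l; auto. apply Rle_pow; [|lia].
      rewrite <- Rinv_1. apply Rinv_le_contravar; lra. }
    pose proof (pow_le (INR (S k)) (S (length ts)) (pos_INR _)).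
    assert (Hprod : qterm q t (S k) * wsum q ts (S k) g
            <= q ^ S k * (C * (/ q) ^ S k * INR (S k) ^ S (length ts)))
      by (apply Rmult_le_compat; auto).
    replace (q ^ S k * (C * (/ q) ^ S k * INR (S k) ^ S (length ts)))
      with (C * INR (S k) ^ S (length ts) * (q ^ S k * (/ q) ^ S k)) in Hprod by ring.
    rewrite qpow_qinv in Hprod. nra.
  - assert (Hrest : exists t, In t ts /\ (1 < t)%nat)
      by (destruct Hbig as [t' [[E|I] Ht']]; [subst; lia|eauto]).
    assert (wsum q ts (S k) g <= C * INR (S k) ^ S (length ts))
      by (apply IH; auto; intros; apply HC; lia).
    pose proof (qterm_le1 q hq t (S k) ltac:(lia)). nra.
Qed.

Lemma zsum_le_poly_geom t ts M : (1 < t)%nat ->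
  zsum q (t :: ts) M <= sumlt (fun k => INR k ^ length ts * q ^ k) M.
Proof.
  intros Ht. apply sumlt_le. intros [|k] Hk; cbv beta iota.
  { apply Rmult_le_pos; [apply pow_le, pos_INR | apply pow_le; lra]. }
  rewrite Rmult_comm. apply Rmult_le_compat.
  - apply zsum_nonneg.
  - apply qterm_nonneg; auto.
  - apply zsum_le_pow.
  - apply qterm_le_geom; auto; lia.
Qed.

Lemma Ttrunc_le_poly_geom ts M : (exists t, In t ts /\ (1 < t)%nat) ->
  Ttrunc q ts M <= sumlt (fun k => INR k ^ length ts * q ^ k) M.
Proof.
  intros Hbig. destruct ts as [|t rest]; [destruct Hbig as [? [[] _]]|].
  apply sumlt_le. intros [|k] Hk; [simpl; lra|]. cbv beta iota. cbn [length].
  change (fun m => q ^ (S k - m) / qint q (S k - m)) with (fun m => qfrac q (S k - m)).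
  pose proof (qterm_nonneg q hq t (S k)). pose proof (pow_lt q (S k) (proj1 hq)).
  assert (Hw : forall m, 0 <= qfrac q (S k - m)) by (intros; apply qfrac_nonneg; auto).
  pose proof (wsum_nonneg rest (S k) _ Hw).
  destruct (Nat.lt_ge_cases 1 t) as [Ht|Ht].
  - pose proof (qterm_le_geom q hq t (S k) Ht ltac:(lia)).
    assert (wsum q rest (S k) (fun m => qfrac q (S k - m)) <= 1 * INR (S k) ^ S (length rest))
      by (apply wsum_le_const; auto; intros; apply qfrac_le1; auto).
    nra.
  - assert (wsum q rest (S k) (fun m => qfrac q (S k - m))
            <= q ^ S k * INR (S k) ^ S (length rest)).
    { apply wsum_le_decay; auto.
      - destruct Hbig as [t' [[E|I] Ht']]; [subst; lia|eauto].
      - intros m Hm. rewrite <- qpow_sub by lia. apply qfrac_le_qpow; auto. }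
    pose proof (qterm_le1 q hq t (S k) ltac:(lia)).
    pose proof (pow_le (INR (S k)) (S (length rest)) (pos_INR _)). nra.
Qed.

Lemma window_qfrac_bounds M m : (m <= M)%nat ->
  0 <= window (qfrac q) M m <= INR M * q ^ (M - m).
Proof.
  intros H. unfold window. split; [apply sumlt_nonneg; intros; apply qfrac_nonneg; auto|].
  eapply Rle_trans; [apply (sumlt_le _ (fun _ => q ^ (M - m)))|].
  - intros k Hk. eapply Rle_trans; [apply qfrac_le_qpow; auto|]. apply qpow_antimono; auto; lia.
  - rewrite sumlt_const. apply Rmult_le_compat_r; [apply pow_le; lra | now apply le_INR].
Qed.

Lemma Tboundary_bounds p ss M : (1 < S p)%nat \/ (exists t, In t ss /\ (1 < t)%nat) ->
  0 <= Tboundary q p ss M <= INR M ^ S (S (length ss)) * q ^ M.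
Proof.
  intros Hbig. unfold Tboundary.
  assert (Hg : forall m, 0 <= vanish0 m (qterm q (S p) m * window (qfrac q) M m)).
  { intros [|m]; simpl; [lra|]. apply Rmult_le_pos; [apply qterm_nonneg; auto|].
    apply sumlt_nonneg. intros; apply qfrac_nonneg; auto. }
  split; [now apply wsum_nonneg|].
  pose proof (pow_lt q M (proj1 hq)). pose proof (pos_INR M).
  replace (INR M ^ S (S (length ss)) * q ^ M) with ((INR M * q ^ M) * INR M ^ S (length ss))
    by (cbn [pow]; ring).
  destruct Hbig as [Hp|Hb].
  - apply wsum_le_const; auto. intros [|m] Hm; [simpl; nra|]. cbn [vanish0].
    pose proof (qterm_le_geom q hq (S p) (S m) Hp ltac:(lia)).
    pose proof (qterm_nonneg q hq (S p) (S m)).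
    destruct (window_qfrac_bounds M (S m) ltac:(lia)) as [Hw0 Hw].
    rewrite qpow_sub in Hw by lia.
    pose proof (pow_lt (/ q) (S m) ltac:(apply Rinv_0_lt_compat; lra)).
    assert (HH : qterm q (S p) (S m) * window (qfrac q) M (S m)
                 <= q ^ S m * (INR M * (q ^ M * (/ q) ^ S m))) by (apply Rmult_le_compat; lra).
    replace (q ^ S m * (INR M * (q ^ M * (/ q) ^ S m)))
      with (INR M * q ^ M * (q ^ S m * (/ q) ^ S m)) in HH by ring.
    rewrite qpow_qinv in HH. lra.
  - apply wsum_le_decay; auto. intros [|m] Hm; [simpl; nra|]. cbn [vanish0].
    pose proof (qterm_le1 q hq (S p) (S m) ltac:(lia)).
    pose proof (qterm_nonneg q hq (S p) (S m)).
    destruct (window_qfrac_bounds M (S m) ltac:(lia)) as [Hw0 Hw].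
    rewrite qpow_sub in Hw by lia. nra.
Qed.

End Bounds.

Lemma sumlt_sum_n (a : nat -> R) n : sumlt a (S n) = sum_n a n.
Proof.
  induction n as [|n IH]; [simpl; rewrite sum_O; lra|].
  rewrite sum_Sn, <- IH. reflexivity.
Qed.

Lemma sumlt_le_Series (a : nat -> R) M :
  (forall k, 0 <= a k) -> ex_series a -> sumlt a M <= Series a.
Proof.
  intros Ha Hex.
  assert (Hincr : forall n, sum_n a n <= sum_n a (S n)).
  { intros n. rewrite sum_Sn. pose proof (Ha (S n)). unfold plus; simpl; lra. }
  pose proof (is_lim_seq_incr_compare _ _ (Series_correct a Hex) Hincr) as Hle.
  destruct M as [|M]; [|rewrite sumlt_sum_n; apply Hle].
  pose proof (Hle 0%nat). rewrite sum_O in *. pose proof (Ha 0%nat). simpl. lra.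
Qed.

Lemma is_lim_seq_pow (u : nat -> R) (l : R) L :
  is_lim_seq u l -> is_lim_seq (fun n => u n ^ L) (l ^ L).
Proof.
  intros H. induction L as [|L IH]; simpl; [apply is_lim_seq_const|].
  exact (is_lim_seq_mult' _ _ _ _ H IH).
Qed.

Section PolyGeom.
Variable q : R.
Hypothesis hq : 0 < q < 1.

Lemma ex_series_poly_geom L : ex_series (fun n => INR (S n) ^ L * q ^ n).
Proof.
  assert (Hpos : forall n, 0 < INR (S n) ^ L * q ^ n).
  { intros n. apply Rmult_lt_0_compat; apply pow_lt; [apply lt_0_INR; lia | lra]. }
  apply (ex_series_ext (fun n => Rabs (INR (S n) ^ L * q ^ n))).
  { intros n. apply Rabs_pos_eq, Rlt_le, Hpos. }
  apply (ex_series_DAlembert _ q); [lra | intros n; pose proof (Hpos n); lra|].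
  assert (Hratio : is_lim_seq (fun n => (1 + / INR (S n)) ^ L * q) (1 ^ L * q)).
  { apply is_lim_seq_mult'; [|apply is_lim_seq_const].
    apply is_lim_seq_pow. replace (Finite 1) with (Finite (1 + 0)) by (f_equal; ring).
    apply is_lim_seq_plus'; [apply is_lim_seq_const|].
    apply (is_lim_seq_incr_1 (fun n => / INR n)).
    replace (Finite 0) with (Rbar_inv p_infty) by reflexivity.
    apply is_lim_seq_inv; [apply is_lim_seq_INR | discriminate]. }
  rewrite pow1, Rmult_1_l in Hratio. revert Hratio. apply is_lim_seq_ext. intros n.
  pose proof (Hpos (S n)). pose proof (Hpos n). pose proof (lt_0_INR (S n) ltac:(lia)).
  rewrite Rabs_pos_eq by (apply Rlt_le, Rdiv_lt_0_compat; auto).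
  replace (1 + / INR (S n)) with (INR (S (S n)) / INR (S n)) by (rewrite (S_INR (S n)); field; lra).
  unfold Rdiv. rewrite Rpow_mult_distr, pow_inv. cbn [pow].
  field. split; apply pow_nonzero; lra.
Qed.

Lemma sumlt_poly_geom_bounded L : exists C, forall M, sumlt (fun k => INR k ^ L * q ^ k) M <= C.
Proof.
  exists (Series (fun n => INR (S n) ^ L * q ^ n)). intros M.
  eapply Rle_trans; [|apply sumlt_le_Series; [|apply ex_series_poly_geom]].
  - apply sumlt_le. intros k _. apply Rmult_le_compat_r; [apply pow_le; lra|].
    apply INR_pow_le; lia.
  - intros k. apply Rmult_le_pos; apply pow_le; [apply pos_INR | lra].
Qed.

Lemma is_lim_seq_poly_geom L : is_lim_seq (fun M => INR M ^ L * q ^ M) 0.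
Proof.
  apply (is_lim_seq_le_le (fun _ => 0) _ (fun n => INR (S n) ^ L * q ^ n)).
  - intros n. split; [apply Rmult_le_pos; apply pow_le; [apply pos_INR | lra]|].
    apply Rmult_le_compat_r; [apply pow_le; lra | apply INR_pow_le; lia].
  - apply is_lim_seq_const.
  - apply ex_series_lim_0, ex_series_poly_geom.
Qed.

End PolyGeom.

Lemma is_lim_seq_sumlt (u : nat -> nat -> R) (l : nat -> R) N :
  (forall j, (j < N)%nat -> is_lim_seq (u j) (l j)) ->
  is_lim_seq (fun M => sumlt (fun j => u j M) N) (sumlt l N).
Proof.
  induction N as [|N IH]; intros H; simpl; [apply is_lim_seq_const|].
  apply is_lim_seq_plus'; [apply IH; intros; apply H|apply H]; lia.
Qed.

Lemma is_lim_seq_incr_bounded (u : nat -> R) C :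
  (forall M, u M <= u (S M)) -> (forall M, u M <= C) -> is_lim_seq u (real (Lim_seq u)).
Proof.
  intros Hincr Hbound. destruct (ex_finite_lim_seq_incr u C Hincr Hbound) as [l Hl].
  now rewrite (is_lim_seq_unique _ _ Hl).
Qed.

Section Limits.
Variable q : R.
Hypothesis hq : 0 < q < 1.

Lemma is_lim_seq_qzeta t ts : (1 < t)%nat -> is_lim_seq (zsum q (t :: ts)) (qzeta q (t :: ts)).
Proof.
  intros Ht. destruct (sumlt_poly_geom_bounded q hq (length ts)) as [C HC].
  apply (is_lim_seq_incr_bounded _ C).
  - intros M. simpl. pose proof (zsum_nonneg q hq ts M). destruct M as [|M]; [simpl; lra|].
    pose proof (qterm_nonneg q hq t (S M)). nra.
  - intros M. eapply Rle_trans; [apply zsum_le_poly_geom|apply HC]; auto.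
Qed.

Lemma is_lim_seq_qT ts : (exists t, In t ts /\ (1 < t)%nat) -> is_lim_seq (Ttrunc q ts) (qT q ts).
Proof.
  intros Hbig. destruct (sumlt_poly_geom_bounded q hq (length ts)) as [C HC].
  apply (is_lim_seq_incr_bounded _ C).
  - intros M. destruct ts as [|t rest]; simpl; [lra|]. destruct M as [|M]; [simpl; lra|].
    pose proof (qterm_nonneg q hq t (S M)).
    pose proof (wsum_nonneg q hq rest (S M) (fun m => qfrac q (S M - m))
                  (fun m => qfrac_nonneg q hq _)).
    unfold qfrac in *. nra.
  - intros M. eapply Rle_trans; [apply Ttrunc_le_poly_geom|apply HC]; auto.
Qed.

Lemma is_lim_seq_Tboundary p ss : (1 < S p)%nat \/ (exists t, In t ss /\ (1 < t)%nat) ->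
  is_lim_seq (Tboundary q p ss) 0.
Proof.
  intros Hbig.
  apply (is_lim_seq_le_le (fun _ => 0) _ (fun M => INR M ^ S (S (length ss)) * q ^ M)).
  - intros M. now apply Tboundary_bounds.
  - apply is_lim_seq_const.
  - now apply is_lim_seq_poly_geom.
Qed.

End Limits.

Theorem theorem5p5 (q : R) (hq : 0 < q < 1) (s1 : nat) (ss : list nat)
  (hpos : List.Forall (fun s => (0 < s)%nat) (s1 :: ss))
  (hbig : exists j, In j (s1 :: ss) /\ (1 < j)%nat) :
  qT q (s1 :: ss) - qT q (ss ++ s1 :: nil)
  = qzeta q (S s1 :: ss)
    - sumlt (fun k => qzeta q ((s1 - k)%nat :: ss ++ (S k :: nil))) (s1 - 1).
Proof.
  destruct s1 as [|p]; [inversion hpos; lia|]. replace (S p - 1)%nat with p by lia.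
  assert (Hcase : (1 < S p)%nat \/ exists t, In t ss /\ (1 < t)%nat)
    by (destruct hbig as [j [[<-|I] Hj]]; eauto).
  assert (Hsnoc : exists t, In t (ss ++ S p :: nil) /\ (1 < t)%nat).
  { destruct Hcase as [H|[t [I Ht]]]; [exists (S p)|exists t]; rewrite in_app_iff; simpl; auto. }
  assert (Hlim : is_lim_seq (Ttrunc q (S p :: ss))
    (qzeta q (S (S p) :: ss) + (qT q (ss ++ S p :: nil) - 0)
     - sumlt (fun j => qzeta q ((S p - j)%nat :: ss ++ S j :: nil)) p)).
  { apply (is_lim_seq_ext (fun M => zsum q (S (S p) :: ss) M
        + (Ttrunc q (ss ++ S p :: nil) M - Tboundary q p ss M)
        - sumlt (fun j => zsum q ((S p - j)%nat :: ss ++ S j :: nil) M) p)).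
    { intros M. now rewrite (Ttrunc_split q hq), Ttele_eq. }
    apply is_lim_seq_minus'; [apply is_lim_seq_plus'; [|apply is_lim_seq_minus']|].
    - apply (is_lim_seq_qzeta q hq); lia.
    - now apply is_lim_seq_qT.
    - now apply is_lim_seq_Tboundary.
    - apply (is_lim_seq_sumlt (fun j => zsum q ((S p - j)%nat :: ss ++ S j :: nil))).
      intros j Hj. apply (is_lim_seq_qzeta q hq); lia. }
  unfold qT at 1. rewrite (is_lim_seq_unique _ _ Hlim). simpl. ring.
Qed.
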